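(* Let $O$ be a Hermitian observable with $\|O\|\le1$, and let $\mathcal M$ be the GQPE measurement (with $\kappa=1$, any positive integer $m$ and $\gamma>0$). For any quantum state $\rho$, let $Z$ be the raw readout of applying $\mathcal M$ to $\rho$, and let $Z'$ be the raw readout of applying $\mathcal M$ again to the resulting post-measurement state. Then $|\mathrm{Cov}(Z,Z')|\le\mathbb V[Z]$.
   Context: GQPE measurement: $N=2^{2m}$, $h=2^{-m}$, $\omega_j=(j-N/2)h$ ($j=0,\dots,N-1$), $\xi_\ell=(\ell-N/2)h$, $\widehat g_\gamma(\xi)=(2\sqrt{2\pi}\gamma)^{1/2}e^{-4\pi^2\gamma^2\xi^2}$, $C=(h\sum_{\ell=1}^{N-1}\widehat g_\gamma(\xi_\ell)^2)^{1/2}$, $\tilde O=O/\kappa$, Kraus operators $O_j=\frac{h^{3/2}}{C}\sum_{\ell=1}^{N-1}e^{2\pi i\xi_\ell(\omega_jI-\tilde O)}\widehat g_\gamma(\xi_\ell)$. Applied to $\rho$, index $j$ occurs with probability $\operatorname{tr}(O_j\rho O_j^\dagger)$, post-state $O_j\rho O_j^\dagger/\operatorname{tr}(O_j\rho O_j^\dagger)$, and the raw readout is $Z=\omega_j$ if $|\omega_j|\le2$, else $Z=0$. $\mathrm{Cov}(Z,Z')=\mathbb E[ZZ']-\mathbb E[Z]\mathbb E[Z']$ over the joint distribution of the two successive measurements. *)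

From mathcomp Require Import all_boot all_algebra.
From mathcomp Require Import all_classical all_reals all_analysis.
From mathcomp Require Import complex.
Import GRing.Theory Num.Theory numFieldNormedType.Exports.

Set Implicit Arguments.
Unset Strict Implicit.
Unset Printing Implicit Defensive.

Local Open Scope ring_scope.
Local Open Scope complex_scope.
Local Open Scope classical_set_scope.

Section GQPE.
Variable R : realType.

(* complex numbers, viewed as a numClosedFieldType (gets a topology) *)
Definition Cx : numClosedFieldType := R[i].

Variable d : nat.

Definition adjmx (p q : nat) (M : 'M[Cx]_(p, q)) : 'M[Cx]_(q, p) :=
  \matrix_(i, j) (M j i)^*.

Definition mexp (A : 'M[Cx]_d) : 'M[Cx]_d :=
  lim ((fun N : nat => \sum_(k < N) (k`!%:R : Cx)^-1 *: A ^+ k) @ \oo).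

Definition hermitian_mx (O : 'M[Cx]_d) : Prop := adjmx O = O.

Definition opnorm_le1 (O : 'M[Cx]_d) : Prop :=
  forall v : 'cV[Cx]_d,
    \sum_(i < d) `|(O *m v) i 0| ^+ 2 <= \sum_(i < d) `|v i 0| ^+ 2.

Definition is_state (rho : 'M[Cx]_d) : Prop :=
  (forall v : 'cV[Cx]_d, 0 <= (adjmx v *m rho *m v) 0 0) /\ \tr rho = 1.

Variables (m : nat) (gamma : R).

Definition NN : nat := (2 ^ (2 * m))%N.
Definition hh : R := ((2 : R) ^+ m)^-1.
Definition omega (j : nat) : R := (j%:R - NN%:R / 2) * hh.
Definition xi (l : nat) : R := (l%:R - NN%:R / 2) * hh.

Definition ghat (x : R) : R :=
  Num.sqrt (2 * Num.sqrt (2 * pi) * gamma) *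
  expR (- (4 * pi ^+ 2 * gamma ^+ 2 * x ^+ 2)).

Definition Cnorm : R :=
  Num.sqrt (hh * \sum_(1 <= l < NN) ghat (xi l) ^+ 2).

(* Kraus operators, with kappa = 1 so that tilde O = O *)
Definition kraus (O : 'M[Cx]_d) (j : nat) : 'M[Cx]_d :=
  ((hh * Num.sqrt hh / Cnorm)%:C : Cx) *:
  \sum_(1 <= l < NN)
     ((ghat (xi l))%:C : Cx) *:
       mexp (((0 +i* (2 * pi * xi l)) : Cx) *: ((omega j)%:C%:M - O)).

Definition outprob (O rho : 'M[Cx]_d) (j : nat) : R :=
  complex.Re (\tr (kraus O j *m rho *m adjmx (kraus O j))).

Definition poststate (O rho : 'M[Cx]_d) (j : nat) : 'M[Cx]_d :=
  (((outprob O rho j)%:C : Cx)^-1) *: (kraus O j *m rho *m adjmx (kraus O j)).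

Definition jointprob (O rho : 'M[Cx]_d) (j k : nat) : R :=
  outprob O rho j * outprob O (poststate O rho j) k.

Definition readout (j : nat) : R :=
  if `|omega j| <= 2 then omega j else 0.

Definition EZ (O rho : 'M[Cx]_d) : R :=
  \sum_(j < NN) outprob O rho j * readout j.
Definition EZ' (O rho : 'M[Cx]_d) : R :=
  \sum_(j < NN) \sum_(k < NN) jointprob O rho j k * readout k.
Definition EZZ' (O rho : 'M[Cx]_d) : R :=
  \sum_(j < NN) \sum_(k < NN) jointprob O rho j k * (readout j * readout k).
Definition CovZZ' (O rho : 'M[Cx]_d) : R :=
  EZZ' O rho - EZ O rho * EZ' O rho.
Definition VarZ (O rho : 'M[Cx]_d) : R :=
  \sum_(j < NN) outprob O rho j * readout j ^+ 2 - EZ O rho ^+ 2.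

End GQPE.

From mathcomp Require Import all_boot all_order all_algebra.
From mathcomp Require Import all_classical all_reals all_analysis.
From mathcomp Require Import complex ring lra.
From mathcomp Require Import sesquilinear spectral.
Import Order.TTheory GRing.Theory Num.Theory numFieldNormedType.Exports.

Set Implicit Arguments.
Unset Strict Implicit.
Unset Printing Implicit Defensive.

Local Open Scope ring_scope.
Local Open Scope complex_scope.
Local Open Scope classical_set_scope.
Local Open Scope sesquilinear_scope.

(* By the spectral theorem O = sum_a lam_a Pi_a, and every Kraus operator is a
   function of O: O_j = sum_a f_j(lam_a) Pi_a, since each exponential
   exp(2 pi i xi (omega_j - O)) is diagonal in the eigenbasis of O.  Both
   measurements therefore only see the eigenvalue label a, drawn with the Born
   weights w_a = tr(Pi_a rho): Pr[j] = sum_a w_a q_j(lam_a) and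
   Pr[j, k] = sum_a w_a q_j(lam_a) q_k(lam_a), where q_j = |f_j|^2.  Discrete
   Fourier orthogonality on the grid and the choice of C give
   sum_j q_j(lam) = 1, so Z and Z' are i.i.d. given a.  With mu(a) = E[Z | a],
   Cov(Z, Z') = Var mu(a) >= 0 while Var Z = E[Var(Z | a)] + Var mu(a). *)

Lemma sqr_mean_le_mean_sqr (R : realDomainType) (I : finType) (p x : I -> R) :
  (forall i, 0 <= p i) -> \sum_i p i = 1 ->
  (\sum_i p i * x i) ^+ 2 <= \sum_i p i * x i ^+ 2.
Proof.
move=> p_ge0 p_sum1; set M := \sum_i p i * x i.
have var_dev : \sum_i p i * x i ^+ 2 - M ^+ 2 = \sum_i p i * (x i - M) ^+ 2.
  transitivity (\sum_i p i * x i ^+ 2 - M *+ 2 * M + M ^+ 2 * \sum_i p i).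
    by rewrite p_sum1; ring.
  rewrite {2}/M mulr_sumr mulr_sumr -sumrB -big_split /=.
  by apply: eq_bigr => i _; ring.
by rewrite -subr_ge0 var_dev sumr_ge0 // => i _; rewrite mulr_ge0 ?sqr_ge0.
Qed.

Lemma sum_expr_root1 (F : fieldType) (z : F) n :
  z ^+ n = 1 -> z != 1 -> \sum_(i < n) z ^+ i = 0.
Proof.
move=> zn1 z_neq1; have := subrX1 z n; rewrite zn1 subrr => /esym/eqP.
by rewrite mulf_eq0 subr_eq0 (negPf z_neq1) => /eqP.
Qed.

Lemma Re_sum_real_mul (R : realType) (I : finType) (w : I -> R) (z : I -> Cx R) :
  complex.Re (\sum_i (w i)%:C * z i) = \sum_i w i * complex.Re (z i).
Proof.
(* complex.Re is only declared linear on the alias Rcomplex R. *)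
rewrite (raddf_sum (@complex.Re R : Rcomplex R -> R)).
by apply: eq_bigr => i _; case: (z i) => x y /=; rewrite !mul0r subr0.
Qed.

Section ComplexExponential.
Variable R : realType.
Local Notation C := (Cx R).

Lemma cvg_complex (a b : nat -> R) (la lb : R) :
  a @ \oo --> la -> b @ \oo --> lb ->
  (fun N => (a N +i* b N : C)) @ \oo --> (la +i* lb : C).
Proof.
move=> /cvgrPdist_lt a_cvg /cvgrPdist_lt b_cvg.
apply/cvgrPdist_lt => e /[dup] e_gt0; rewrite ltcE => /andP[/eqP e_real eRe_gt0].
have eE : e = (complex.Re e)%:C by case: e e_real {e_gt0 eRe_gt0} => ? ? /= ->.
have e2_gt0 : 0 < complex.Re e / 2 by rewrite divr_gt0.
near=> N.
have la_near : `|la - a N| < complex.Re e / 2 by near: N; exact: a_cvg.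
have lb_near : `|lb - b N| < complex.Re e / 2 by near: N; exact: b_cvg.
have -> : (la +i* lb : C) - (a N +i* b N) = (la - a N)%:C + 'i * (lb - b N)%:C.
  by simpc.
apply: (le_lt_trans (ler_normD _ _)).
rewrite normrM !normc_def /= expr0n expr1n /= !addr0 add0r sqrtr1 !sqrtr_sqr mul1r.
by rewrite eE -rmorphD ltcR (splitr (complex.Re e)) ltrD.
Unshelve. all: by end_near.
Qed.

Lemma conjC_real_complex (x : R) : (x%:C : C)^*%R = x%:C.
Proof. exact: conjc_real. Qed.

Definition expi (t : R) : C := cos t +i* sin t.

Lemma expi0 : expi 0 = 1.
Proof. by rewrite /expi cos0 sin0. Qed.

Lemma expiD x y : expi (x + y) = expi x * expi y.
Proof. by rewrite /expi cosD sinD; simpc; congr (_ +i* _); ring. Qed.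

Lemma expiN x : expi (- x) = (expi x)^*%R.
Proof. by rewrite /expi cosN sinN. Qed.

Lemma expiMn x n : expi (n%:R * x) = expi x ^+ n.
Proof.
elim: n => [|n IHn]; first by rewrite mul0r expi0.
by rewrite mulrSr mulrDl mul1r expiD IHn exprSr.
Qed.

Lemma expi_2pi_nat n : expi (2 * pi * n%:R) = 1.
Proof. by rewrite mulrC expiMn /expi mulr_natl cos2pi sin2pi expr1n. Qed.

Lemma expr_imag_even (t : R) n :
  (0 +i* t : C) ^+ n.*2 = ((-1) ^+ n * t ^+ n.*2)%:C.
Proof.
elim: n => [|n IHn]; first by rewrite !expr0 mul1r.
by rewrite doubleS 2!exprS IHn mulrA; simpc; congr (_ +i* _); rewrite !exprS; ring.
Qed.

Lemma expr_imag_odd (t : R) n :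
  (0 +i* t : C) ^+ n.*2.+1 = 0 +i* ((-1) ^+ n * t ^+ n.*2.+1).
Proof. by rewrite exprS expr_imag_even; simpc; congr (_ +i* _); rewrite exprS; ring. Qed.

Lemma exp_coeff_imag (t : R) k :
  (k`!%:R : C)^-1 * (0 +i* t) ^+ k = cos_coeff t k +i* sin_coeff t k.
Proof.
have -> : (k`!%:R : C)^-1 = ((k`!%:R : R)^-1)%:C.
  by rewrite rmorphV ?rmorph_nat // unitfE pnatr_eq0 -lt0n fact_gt0.
rewrite /cos_coeff /sin_coeff -[k]odd_double_half.
case: (odd k); rewrite /= ?add1n ?add0n odd_double doubleK /=.
  by rewrite expr_imag_odd; simpc; rewrite mulrC.
by rewrite expr_imag_even; simpc; rewrite -exprnP mulrC.
Qed.

Lemma expi_series_cvg (t : R) :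
  (fun N => \sum_(k < N) (k`!%:R : C)^-1 * (0 +i* t) ^+ k) @ \oo --> expi t.
Proof.
have -> : (fun N => \sum_(k < N) (k`!%:R : C)^-1 * (0 +i* t) ^+ k) =
    (fun N => series (cos_coeff t) N +i* series (sin_coeff t) N).
  apply: funext => N; rewrite /series /= !big_mkord.
  elim: N => [|N IHN]; first by rewrite !big_ord0.
  by rewrite !big_ord_recr /= IHN exp_coeff_imag.
apply: cvg_complex; rewrite unlock.
  exact: is_cvg_series_cos_coeff.
exact: is_cvg_series_sin_coeff.
Qed.
End ComplexExponential.

Section SpectralCalculus.
Variables (C : numClosedFieldType) (n : nat) (P : 'M[C]_n).
Hypothesis P_unitary : P \is unitarymx.

Definition eigenproj (a : 'I_n) : 'M[C]_n := P^t* *m delta_mx a a *m P.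

Definition spectral_fun (u : 'I_n -> C) : 'M[C]_n := \sum_a u a *: eigenproj a.

Lemma eigenprojM a b :
  eigenproj a *m eigenproj b = if a == b then eigenproj a else 0.
Proof.
rewrite /eigenproj !mulmxA mulmxtVK // -[_ *m delta_mx b b]mulmxA.
by rewrite mul_delta_mx_cond; case: eqP => [->|_]; rewrite ?mulmx0 ?mul0mx.
Qed.

Lemma sum_eigenproj : \sum_a eigenproj a = 1%:M.
Proof.
rewrite /eigenproj -mulmx_suml -mulmx_sumr -mx1_sum_delta mulmx1.
by apply/mulmx1C/unitarymxP.
Qed.

Lemma spectral_funM u v :
  spectral_fun u *m spectral_fun v = spectral_fun (fun a => u a * v a).
Proof.
rewrite /spectral_fun mulmx_suml; apply: eq_bigr => a _.
rewrite mulmx_sumr (bigD1 a) //= big1 ?addr0 => [|b /negPf ba].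
  by rewrite -scalemxAl -scalemxAr eigenprojM eqxx scalerA mulrC.
by rewrite -scalemxAl -scalemxAr eigenprojM eq_sym ba !scaler0.
Qed.

Lemma spectral_fun_cst c : spectral_fun (fun=> c) = c%:M.
Proof. by rewrite /spectral_fun -scaler_sumr sum_eigenproj scalemx1. Qed.

Lemma spectral_funD u v :
  spectral_fun (fun a => u a + v a) = spectral_fun u + spectral_fun v.
Proof. by rewrite /spectral_fun -big_split; apply: eq_bigr => a _; rewrite scalerDl. Qed.

Lemma spectral_funZ c u : spectral_fun (fun a => c * u a) = c *: spectral_fun u.
Proof. by rewrite /spectral_fun scaler_sumr; apply: eq_bigr => a _; rewrite scalerA. Qed.

Lemma spectral_funN u : spectral_fun (fun a => - u a) = - spectral_fun u.
Proof.
rewrite -scaleN1r -spectral_funZ.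
by congr spectral_fun; apply: funext => a; rewrite mulN1r.
Qed.

Lemma spectral_fun_sum (I : Type) (r : seq I) (u : I -> 'I_n -> C) :
  spectral_fun (fun a => \sum_(i <- r) u i a) = \sum_(i <- r) spectral_fun (u i).
Proof.
rewrite /spectral_fun exchange_big /=; apply: eq_bigr => a _.
by rewrite scaler_suml.
Qed.

Lemma spectral_funX u k : spectral_fun u ^+ k = spectral_fun (fun a => u a ^+ k).
Proof.
elim: k => [|k IHk]; first by rewrite expr0 -[1]/(1%:M : 'M[C]_n) -spectral_fun_cst.
rewrite exprS IHk -mulmxE spectral_funM.
by congr spectral_fun; apply: funext => a; rewrite exprS.
Qed.

Lemma spectral_fun_adj u : (spectral_fun u)^t* = spectral_fun (fun a => (u a)^*%R).
Proof.
rewrite /spectral_fun raddf_sum /= map_mx_sum; apply: eq_bigr => a _.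
rewrite linearZ /= map_mxZ /eigenproj !trmx_mul !map_mxM trmxCK mulmxA.
by rewrite trmx_delta map_delta_mx ?conjC0 ?conjC1.
Qed.

Lemma spectral_fun_cvg (u : nat -> 'I_n -> C) (l : 'I_n -> C) :
  (forall a, (fun N => u N a) @ \oo --> l a) ->
  (fun N => spectral_fun (u N)) @ \oo --> spectral_fun l.
Proof.
move=> u_cvg; rewrite /spectral_fun.
elim: (index_enum _) => [|a r IHr].
  by under eq_fun do rewrite big_nil; rewrite big_nil; exact: cvg_cst.
under eq_fun do rewrite big_cons; rewrite big_cons.
by apply: cvgD; [exact: cvgZl | exact: IHr].
Qed.

Definition proj_tr (a : 'I_n) (S : 'M[C]_n) : C := \tr (eigenproj a *m S).

Lemma sum_proj_tr S : \sum_a proj_tr a S = \tr S.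
Proof. by rewrite /proj_tr -raddf_sum -mulmx_suml sum_eigenproj mul1mx. Qed.

Lemma proj_trZ a c S : proj_tr a (c *: S) = c * proj_tr a S.
Proof. by rewrite /proj_tr -scalemxAr mxtraceZ. Qed.

Lemma proj_tr_sandwich a u S v :
  proj_tr a (spectral_fun u *m S *m spectral_fun v) = u a * v a * proj_tr a S.
Proof.
have eigenprojE : eigenproj a = spectral_fun (fun b => (b == a)%:R).
  rewrite /spectral_fun (bigD1 a) //= eqxx scale1r big1 ?addr0 // => b /negPf ->.
  by rewrite scale0r.
have : spectral_fun v *m eigenproj a *m spectral_fun u = (u a * v a) *: eigenproj a.
  rewrite eigenprojE !spectral_funM -spectral_funZ.
  by congr spectral_fun; apply: funext => b; case: eqP => [->|];
    rewrite ?mulr1 ?mulr0 ?mul0r // mulrC.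
rewrite /proj_tr mulmxA mxtrace_mulC !mulmxA => ->.
by rewrite -scalemxAl mxtraceZ.
Qed.

Lemma proj_tr_ge0 a S : (forall v : 'cV[C]_n, 0 <= (v^t* *m S *m v) 0 0) ->
  0 <= proj_tr a S.
Proof.
move=> /(_ (P^t* *m delta_mx a 0)); rewrite trmx_mul map_mxM trmxCK.
rewrite trmx_delta map_delta_mx ?conjC0 ?conjC1 //.
rewrite /proj_tr /eigenproj -(mul_delta_mx (0 : 'I_1) a a).
by rewrite -!mulmxA [X in \tr X]mulmxA mxtrace_mulC /mxtrace big_ord1 !mulmxA.
Qed.
End SpectralCalculus.

Lemma adjmxE (R : realType) p q (M : 'M[Cx R]_(p, q)) : adjmx M = M^t*.
Proof. by apply/matrixP => i j; rewrite !mxE. Qed.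

Lemma mexp_spectral_fun (R : realType) d (P : 'M[Cx R]_d) (s : 'I_d -> R) :
  P \is unitarymx ->
  mexp (spectral_fun P (fun a => 0 +i* s a)) = spectral_fun P (fun a => expi (s a)).
Proof.
move=> P_unitary; apply: cvg_lim; first exact: norm_hausdorff.
under eq_fun => N.
  rewrite (eq_bigr (fun k : 'I_N => spectral_fun P (fun a =>
      (k`!%:R : Cx R)^-1 * (0 +i* s a) ^+ k))) => [|k _]; last first.
    by rewrite spectral_funX // -spectral_funZ.
  rewrite -spectral_fun_sum.
  over.
by apply: spectral_fun_cvg => a; exact: expi_series_cvg.
Qed.

Section FourierGrid.
Variables (R : realType) (m : nat).
Hypothesis m_gt0 : (0 < m)%N.
Local Notation N := (NN m).
Local Notation h := (hh R m).

Lemma hh_gt0 : 0 < h.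
Proof. by rewrite invr_gt0 exprn_gt0. Qed.

Lemma hh_sqr_NN : h ^+ 2 * N%:R = 1.
Proof. by rewrite /NN natrX mulnC exprM exprVn mulVf // expf_neq0 // expf_neq0. Qed.

Lemma NN_gt1 : (1 < N)%N.
Proof. by rewrite /NN -{1}(expn0 2) ltn_exp2l // muln_gt0. Qed.

Lemma cos_grid_lt1 k : (0 < k < N)%N -> cos (2 * pi * k%:R * h ^+ 2) < 1.
Proof.
move=> /andP[k_gt0 k_lt]; set y := pi * (k%:R * h ^+ 2).
have y_gt0 : 0 < y by rewrite !mulr_gt0 ?pi_gt0 ?ltr0n ?exprn_gt0 ?hh_gt0.
have y_lt : y < pi.
  rewrite -[ltRHS]mulr1 ltr_pM2l ?pi_gt0 // -[X in _ < X]hh_sqr_NN.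
  by rewrite [X in _ < X]mulrC ltr_pM2r ?ltr_nat ?exprn_gt0 ?hh_gt0.
have sin_gt0 : 0 < sin y ^+ 2 by rewrite exprn_gt0 // sin_gt0_pi ?y_gt0.
have -> : 2 * pi * k%:R * h ^+ 2 = y *+ 2 by rewrite /y mulr2n; ring.
by rewrite cos_mulr2n cos2sin2; move: (sin y ^+ 2) sin_gt0 => s; lra.
Qed.

Lemma expi_grid_neq1 l l' : (l < N)%N -> (l' < N)%N -> l != l' ->
  expi (2 * pi * (l%:R - l'%:R) * h ^+ 2) != 1.
Proof.
move=> l_lt l'_lt l_neq; apply/eqP => /(congr1 (@complex.Re R)) /= cos_eq1.
have grid_lt1 k k' : (k < k')%N -> (k' < N)%N ->
    cos (2 * pi * (k'%:R - k%:R) * h ^+ 2) < 1.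
  move=> k_lt k'_lt; rewrite -natrB; last exact: ltnW.
  apply: cos_grid_lt1.
  by rewrite subn_gt0 k_lt (leq_ltn_trans (leq_subr _ _) k'_lt).
have [lt|gt|l_eq] := ltngtP l l'; last by rewrite l_eq eqxx in l_neq.
- move: (grid_lt1 _ _ lt l'_lt); rewrite -cosN.
  have -> : - (2 * pi * (l'%:R - l%:R) * h ^+ 2) = 2 * pi * (l%:R - l'%:R) * h ^+ 2.
    by ring.
  by rewrite cos_eq1 ltxx.
- by have := grid_lt1 _ _ gt l_lt; rewrite cos_eq1 ltxx.
Qed.

Lemma grid_fourier_orthogonality l l' (lam : R) : (l < N)%N -> (l' < N)%N ->
  \sum_(j < N) expi (2 * pi * xi R m l * (omega R m j - lam)) *
     expi (- (2 * pi * xi R m l' * (omega R m j - lam))) =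
  if l == l' then N%:R else 0.
Proof.
move=> l_lt l'_lt; under eq_bigr do rewrite -expiD.
have [<-|l_neq] := eqVneq l l'.
  by under eq_bigr do rewrite subrr expi0; rewrite sumr_const card_ord.
(* The phase difference is affine in j: a geometric sum in the root of unity expi x. *)
set x := 2 * pi * (l%:R - l'%:R) * h ^+ 2.
set c := - (2 * pi * (l%:R - l'%:R) * h * (N%:R / 2 * h + lam)).
have phaseE (j : 'I_N) : 2 * pi * xi R m l * (omega R m j - lam) -
    2 * pi * xi R m l' * (omega R m j - lam) = (j : nat)%:R * x + c.
  by rewrite /x /c /xi /omega; ring.
under eq_bigr do rewrite phaseE expiD expiMn.
rewrite -mulr_suml sum_expr_root1 ?mul0r ?expi_grid_neq1 //.
rewrite -expiMn.
have -> : N%:R * x = 2 * pi * l%:R + - (2 * pi * l'%:R).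
  transitivity (2 * pi * (l%:R - l'%:R) * (h ^+ 2 * N%:R)).
    by rewrite /x; ring.
  by rewrite hh_sqr_NN; ring.
by rewrite expiD expiN !expi_2pi_nat conjC1 mul1r.
Qed.
End FourierGrid.

Section KrausSymbol.
Variables (R : realType) (m : nat) (gamma : R).
Local Notation C := (Cx R).
Local Notation N := (NN m).
Local Notation h := (hh R m).
Local Notation g l := (ghat gamma (xi R m l)).

Definition kraus_scale : R := h * Num.sqrt h / Cnorm m gamma.

Definition kraus_symbol (lam : R) (j : nat) : C :=
  kraus_scale%:C *
  \sum_(1 <= l < N) (g l)%:C * expi (2 * pi * xi R m l * (omega R m j - lam)).

Definition kraus_weight (lam : R) (j : nat) : R :=
  complex.Re (kraus_symbol lam j) ^+ 2 + complex.Im (kraus_symbol lam j) ^+ 2.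

Lemma kraus_weight_ge0 lam j : 0 <= kraus_weight lam j.
Proof. by rewrite addr_ge0 ?sqr_ge0. Qed.

Lemma kraus_symbol_mulJ lam j :
  kraus_symbol lam j * (kraus_symbol lam j)^*%R = (kraus_weight lam j)%:C.
Proof. by rewrite add_Re2_Im2 sqr_normc. Qed.

Lemma kraus_symbol_sqr_sum lam :
  \sum_(j < N) kraus_symbol lam j * (kraus_symbol lam j)^*%R =
  (kraus_scale ^+ 2 * (\sum_(1 <= l < N) g l ^+ 2) * N%:R)%:C.
Proof.
set th := fun (l : nat) (j : 'I_N) => 2 * pi * xi R m l * (omega R m j - lam).
have expand (j : 'I_N) : kraus_symbol lam j * (kraus_symbol lam j)^*%R =
    (kraus_scale ^+ 2)%:C * \sum_(1 <= l < N) \sum_(1 <= l' < N)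
      (g l * g l')%:C * (expi (th l j) * expi (- th l' j)).
  rewrite /kraus_symbol; move: kraus_scale => k.
  rewrite rmorphM /= conjC_real_complex rmorph_sum mulrACA -rmorphM -expr2.
  congr (_ * _); rewrite mulr_suml; apply: eq_bigr => l _.
  rewrite mulr_sumr; apply: eq_bigr => l' _.
  rewrite [X in _ * X]rmorphM /= conjC_real_complex -expiN [in RHS]rmorphM /th.
  by ring.
under eq_bigr do rewrite expand.
rewrite -mulr_sumr exchange_big /=.
under eq_bigr do rewrite exchange_big /=.
rewrite (eq_big_nat _ _ (F2 := fun l => (g l ^+ 2 * N%:R)%:C)); last first.
  move=> l /andP[l_ge1 l_lt].
  under eq_big_nat => l' /andP[_ l'_lt]
    do rewrite -mulr_sumr (grid_fourier_orthogonality _ l_lt l'_lt).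
  rewrite (bigD1_seq l) ?iota_uniq ?mem_index_iota ?l_ge1 ?l_lt //=.
  rewrite eqxx big1 ?addr0.
    by rewrite !rmorphM rmorph_nat expr2.
  by move=> l' /negPf; rewrite eq_sym => ->; rewrite mulr0.
by rewrite -rmorph_sum -rmorphM -mulr_suml mulrA.
Qed.

Hypotheses (m_gt0 : (0 < m)%N) (gamma_gt0 : 0 < gamma).

Lemma ghat_gt0 x : 0 < ghat gamma x.
Proof.
by rewrite mulr_gt0 ?expR_gt0 // sqrtr_gt0 !mulr_gt0 // sqrtr_gt0 mulr_gt0 ?pi_gt0.
Qed.

Lemma sum_ghat_sqr_gt0 : 0 < \sum_(1 <= l < N) g l ^+ 2.
Proof.
rewrite (bigD1_seq 1) ?iota_uniq ?mem_index_iota ?NN_gt1 //=.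
by rewrite ltr_pwDl ?exprn_gt0 ?ghat_gt0 // sumr_ge0 // => l _; rewrite sqr_ge0.
Qed.

Lemma kraus_scale_normalization :
  kraus_scale ^+ 2 * (\sum_(1 <= l < N) g l ^+ 2) * N%:R = 1.
Proof.
rewrite /kraus_scale /Cnorm.
move: (@hh_gt0 R m) (@hh_sqr_NN R m) sum_ghat_sqr_gt0.
move: (hh R m) (\sum_(1 <= l < N) g l ^+ 2) => h' S h'_gt0 h'N S_gt0.
rewrite !exprMn exprVn !sqr_sqrtr ?mulr_ge0 ?ltW // -[RHS]h'N.
by field; rewrite !gt_eqF.
Qed.

Lemma sum_kraus_weight lam : \sum_(j < N) kraus_weight lam j = 1.
Proof.
apply: complexI; rewrite rmorph_sum /=.
under eq_bigr do rewrite -kraus_symbol_mulJ.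
by rewrite kraus_symbol_sqr_sum kraus_scale_normalization.
Qed.
End KrausSymbol.

Section Measurement.
Variables (R : realType) (d : nat) (O : 'M[Cx R]_d) (m : nat) (gamma : R).
Hypothesis O_hermitian : hermitian_mx O.
Local Notation C := (Cx R).
Local Notation P := (spectralmx O).
Local Notation N := (NN m).

Definition eigval (a : 'I_d) : R := complex.Re (spectral_diag O 0 a).

Lemma hermitian_spectral_fun : O = spectral_fun P (fun a => (eigval a)%:C).
Proof.
have O_herm : O \is hermsymmx.
  by apply/is_hermitianmxP; rewrite expr0 scale1r -adjmxE O_hermitian.
have /orthomx_spectralP {1}-> := hermitian_normalmx O_herm.
rewrite invmx_unitary ?spectral_unitarymx // diag_mx_sum_delta.
rewrite mulmx_sumr mulmx_suml; apply: eq_bigr => a _.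
have /mxOverP/(_ 0 a)/RRe_real <- := hermitian_spectral_diag_real O_herm.
by rewrite -scalemxAr -scalemxAl.
Qed.

Lemma kraus_spectral_fun j :
  kraus m gamma O j = spectral_fun P (fun a => kraus_symbol m gamma (eigval a) j).
Proof.
rewrite /kraus /kraus_symbol spectral_funZ; congr (_ *: _).
rewrite spectral_fun_sum; apply: eq_bigr => l _.
rewrite spectral_funZ; congr (_ *: _).
have P_unitary := spectral_unitarymx O.
rewrite [X in _ - X]hermitian_spectral_fun -(spectral_fun_cst P_unitary).
rewrite -spectral_funN -spectral_funD -spectral_funZ -(mexp_spectral_fun _ P_unitary).
by congr (mexp (spectral_fun P _)); apply: funext => a; simpc; congr (_ +i* _); ring.
Qed.

Local Notation q lam j := (kraus_weight m gamma lam j).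

Lemma outprob_spectral S j :
  outprob m gamma O S j = \sum_a q (eigval a) j * complex.Re (proj_tr P a S).
Proof.
rewrite /outprob kraus_spectral_fun adjmxE spectral_fun_adj.
rewrite -(sum_proj_tr (spectral_unitarymx O)).
under eq_bigr do rewrite proj_tr_sandwich ?spectral_unitarymx // kraus_symbol_mulJ.
exact: Re_sum_real_mul.
Qed.

Lemma proj_tr_poststate rho a j :
  proj_tr P a (poststate m gamma O rho j) =
  ((outprob m gamma O rho j)^-1 * q (eigval a) j)%:C * proj_tr P a rho.
Proof.
rewrite /poststate proj_trZ kraus_spectral_fun adjmxE spectral_fun_adj.
rewrite proj_tr_sandwich ?spectral_unitarymx // kraus_symbol_mulJ.
by rewrite rmorphM fmorphV mulrA.
Qed.

Definition born_weight (rho : 'M[C]_d) (a : 'I_d) : R := complex.Re (proj_tr P a rho).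

Lemma outprob_born rho j :
  outprob m gamma O rho j = \sum_a q (eigval a) j * born_weight rho a.
Proof. by rewrite outprob_spectral. Qed.

Section DensityMatrix.
Variable rho : 'M[C]_d.
Hypothesis rho_state : is_state rho.
Local Notation w := (born_weight rho).

Lemma born_weightE a : proj_tr P a rho = (w a)%:C.
Proof.
apply/esym/RRe_real/ger0_real/proj_tr_ge0 => v.
by rewrite -adjmxE; case: rho_state.
Qed.

Lemma born_weight_ge0 a : 0 <= w a.
Proof.
rewrite -ler0c -born_weightE proj_tr_ge0 // => v.
by rewrite -adjmxE; case: rho_state.
Qed.

Lemma sum_born_weight : \sum_a w a = 1.
Proof.
apply: complexI; rewrite rmorph_sum /=.
under eq_bigr do rewrite -born_weightE.
by rewrite sum_proj_tr ?spectral_unitarymx //; case: rho_state.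
Qed.

Lemma jointprob_born j k :
  jointprob m gamma O rho j k = \sum_a w a * q (eigval a) j * q (eigval a) k.
Proof.
rewrite /jointprob [X in _ * X]outprob_spectral.
under eq_bigr do rewrite proj_tr_poststate born_weightE -rmorphM /=.
(* When outprob rho j = 0 the post-measurement state is junk (0^-1 = 0), but
   then every term on the right vanishes as well. *)
have [p0|p_neq0] := eqVneq (outprob m gamma O rho j) 0.
  rewrite p0 mul0r; symmetry; apply: big1 => a _.
  move: p0; rewrite outprob_born => /eqP; rewrite psumr_eq0 => [|b _]; last first.
    by rewrite mulr_ge0 ?kraus_weight_ge0 ?born_weight_ge0.
  by move=> /allP/(_ a (mem_index_enum a))/eqP; rewrite mulrC => ->; rewrite mul0r.
rewrite mulr_sumr; apply: eq_bigr => a _; move: p_neq0.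
set p := outprob m gamma O rho j => p_neq0.
transitivity (p * p^-1 * (w a * q (eigval a) j * q (eigval a) k)); first ring.
by rewrite mulfV // mul1r.
Qed.
End DensityMatrix.
End Measurement.

Section Moments.
Variables (R : realType) (d : nat) (O rho : 'M[Cx R]_d) (m : nat) (gamma : R).
Hypotheses (O_hermitian : hermitian_mx O) (rho_state : is_state rho).
Hypotheses (m_gt0 : (0 < m)%N) (gamma_gt0 : 0 < gamma).
Local Notation N := (NN m).
Local Notation z j := (readout R m j).
Local Notation q lam j := (kraus_weight m gamma lam j).
Local Notation w := (born_weight O rho).
Local Notation lam := (eigval O).

Definition readout_mean (l : R) : R := \sum_(j < N) q l j * z j.
Definition readout_sqr_mean (l : R) : R := \sum_(j < N) q l j * z j ^+ 2.

Lemma EZ_born : EZ m gamma O rho = \sum_a w a * readout_mean (lam a).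
Proof.
rewrite /EZ; under eq_bigr do rewrite outprob_born // mulr_suml.
rewrite exchange_big; apply: eq_bigr => a _; rewrite /readout_mean mulr_sumr.
by apply: eq_bigr => j _; ring.
Qed.

Lemma EZ2_born :
  \sum_(j < N) outprob m gamma O rho j * z j ^+ 2 =
  \sum_a w a * readout_sqr_mean (lam a).
Proof.
under eq_bigr do rewrite outprob_born // mulr_suml.
rewrite exchange_big; apply: eq_bigr => a _; rewrite /readout_sqr_mean mulr_sumr.
by apply: eq_bigr => j _; ring.
Qed.

Lemma EZ'_born : EZ' m gamma O rho = \sum_a w a * readout_mean (lam a).
Proof.
rewrite /EZ'; under eq_bigr do under eq_bigr do rewrite jointprob_born // mulr_suml.
under eq_bigr do rewrite exchange_big /=.
rewrite exchange_big /=; apply: eq_bigr => a _.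
rewrite -[RHS]mulr1 -(sum_kraus_weight m_gt0 gamma_gt0 (lam a)) mulr_sumr.
apply: eq_bigr => j _.
by rewrite /readout_mean mulr_sumr mulr_suml; apply: eq_bigr => k _; ring.
Qed.

Lemma EZZ'_born : EZZ' m gamma O rho = \sum_a w a * readout_mean (lam a) ^+ 2.
Proof.
rewrite /EZZ'; under eq_bigr do under eq_bigr do rewrite jointprob_born // mulr_suml.
under eq_bigr do rewrite exchange_big /=.
rewrite exchange_big /=; apply: eq_bigr => a _.
rewrite expr2 mulrA /readout_mean [w a * _]mulr_sumr mulr_suml.
apply: eq_bigr => j _.
by rewrite mulr_sumr; apply: eq_bigr => k _; ring.
Qed.

Lemma sqr_readout_mean_le l : readout_mean l ^+ 2 <= readout_sqr_mean l.
Proof.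
apply: sqr_mean_le_mean_sqr => [j|]; first exact: kraus_weight_ge0.
exact: sum_kraus_weight.
Qed.
End Moments.

Theorem propositionD5 (R : realType) (d : nat) (O rho : 'M[Cx R]_d)
    (m : nat) (gamma : R) :
  hermitian_mx O -> opnorm_le1 O -> (0 < m)%N -> 0 < gamma -> is_state rho ->
  `|CovZZ' m gamma O rho| <= VarZ m gamma O rho.
Proof.
move=> O_herm _ m_gt0 gamma_gt0 rho_state.
rewrite /CovZZ' /VarZ EZ_born // EZ'_born // EZZ'_born // EZ2_born //.
have w_ge0 := born_weight_ge0 O rho_state.
have w_sum1 := sum_born_weight O rho_state.
have cov_ge0 := sqr_mean_le_mean_sqr
  (fun a => readout_mean m gamma (eigval O a)) w_ge0 w_sum1.
rewrite ger0_norm ?subr_ge0 // lerB // ler_sum // => a _.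
by rewrite ler_wpM2l // sqr_readout_mean_le.
Qed.
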